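(* Let $E$ be a Banach lattice with an order continuous norm, let $\mathfrak{B}$ be a Boolean subalgebra of $\mathfrak{B}(E)$ and let $T\colon E\to E$ be a $\mathfrak{B}$-Volterra operator. For every forward filtration $\xi$ in $\mathfrak{B}$: the spaces $\mathcal{M}_0(\xi)$ and $\mathcal{M}_1(\xi^* )$ are isomorphic; and $T$ induces a positive operator $\hat{T}_{\xi}\colon\mathcal{M}_0(\xi)\to\mathcal{M}_0(\xi)$, given by $\hat{T}_{\xi}((x_n)_{n\ge1})=(\xi_nTx_n)_{n\ge1}$, such that $\mathbf{s}\circ\hat{T}_{\xi}=\hat{T}_{L(\xi)}\circ\mathbf{s}$ as maps $\mathcal{M}_0(\xi)\to\mathcal{M}_0(L(\xi))$, and the analogous square $\mathbf{s}\circ\hat{T}_{\xi}=\hat{T}_{L(\xi)}\circ\mathbf{s}$ with $\mathcal{M}_1(\xi^* )$ and $\mathcal{M}_1(L(\xi^* ))$ in place of $\mathcal{M}_0(\xi)$ and $\mathcal{M}_0(L(\xi))$ commutes, where $\mathbf{s}((x_n)_{n\ge1})=(x_{n+1})_{n\ge1}$ is the forward shift.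
   Context: $\mathfrak{B}(E)$ is the Boolean algebra of all order projections on $E$, with $\pi\le\rho$ iff $\pi\rho=\pi$, $\pi\wedge\rho=\pi\rho$, $\pi^*=I_E-\pi$, zero $\mathbf{0}$ and unit $\mathbf{1}=I_E$. A positive operator $T$ is $\mathfrak{B}$-Volterra if for all $\pi\in\mathfrak{B}$, $x,y\in E$, $\pi x=\pi y$ implies $\pi Tx=\pi Ty$. A forward filtration in $\mathfrak{B}$ is a map $\xi\colon\{0,1,\dots,\infty\}\to\mathfrak{B}$ with $\xi_n\le\xi_{n+1}$, $\xi_0=\mathbf 0$, $\xi_\infty=\mathbf 1$; $L(\xi)_0=\xi_0$, $L(\xi)_n=\xi_{n+1}$ ($n\ge1$). For a forward filtration $\xi$, $\xi^*$ is the backward filtration $(\xi^* )_n=(\xi_n)^*$ (so $\xi^*_0=\mathbf 1$, $\xi^*_\infty=\mathbf 0$, decreasing), and $L(\xi^* )$ is defined by the same shift formula, i.e. $L(\xi^* )=(L(\xi))^*$. $\mathcal{M}_0(\xi)$ is the ordered vector space of sequences $(x_n)_{n\ge1}$ in $E$ with $\xi_nx_m=x_n$ whenever $m\ge n\ge1$; for a backward filtration $\eta$, $\mathcal{M}_1(\eta)$ is the set of sequences $(x_n)_{n\ge1}$ with $(I-\eta_n)x_m=x_n$ whenever $m\ge n$. *)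

From HB Require Import structures.
From mathcomp Require Import all_boot all_order all_algebra.
From mathcomp Require Import all_classical all_reals all_analysis.
Set Implicit Arguments. Unset Strict Implicit. Unset Printing Implicit Defensive.
Import Order.TTheory GRing.Theory Num.Theory.
Import numFieldNormedType.Exports.
Local Open Scope ring_scope.

Section BL.
Variables (R : realType) (E : completeNormedModType R).

Record riesz_space (le : E -> E -> Prop) (join : E -> E -> E) : Prop := {
  rs_refl : forall x, le x x;
  rs_trans : forall x y z, le x y -> le y z -> le x z;
  rs_antisym : forall x y, le x y -> le y x -> x = y;
  rs_add : forall x y z, le x y -> le (x + z) (y + z);
  rs_scale : forall (a : R) x y, 0 <= a -> le x y -> le (a *: x) (a *: y);
  rs_join_l : forall x y, le x (join x y);
  rs_join_r : forall x y, le y (join x y);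
  rs_join_lub : forall x y z, le x z -> le y z -> le (join x y) z
}.

Definition babs (join : E -> E -> E) (x : E) : E := join x (- x).

Definition banach_lattice (le : E -> E -> Prop) (join : E -> E -> E) : Prop :=
  riesz_space le join /\
  forall x y, le (babs join x) (babs join y) -> `|x| <= `|y|.

Definition order_continuous_norm (le : E -> E -> Prop) : Prop :=
  forall D : set E,
    (exists x, D x) ->
    (forall x y, D x -> D y -> exists2 z, D z & le z x /\ le z y) ->
    (forall x, D x -> le 0 x) ->
    (forall u, (forall x, D x -> le u x) -> le u 0) ->
    forall e : R, 0 < e -> exists2 x, D x & `|x| < e.

Definition linear_op (f : E -> E) : Prop :=
  forall (a : R) x y, f (a *: x + y) = a *: f x + f y.

Definition positive_op (le : E -> E -> Prop) (f : E -> E) : Prop :=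
  linear_op f /\ forall x, le 0 x -> le 0 (f x).

Definition order_projection (le : E -> E -> Prop) (P : E -> E) : Prop :=
  linear_op P /\ (forall x, P (P x) = P x) /\
  (forall x, le 0 x -> le 0 (P x) /\ le (P x) x).

Definition zero_op : E -> E := fun _ => 0.
Definition id_op : E -> E := fun x => x.
Definition compl_op (P : E -> E) : E -> E := fun x => x - P x.

Definition boolean_subalgebra (le : E -> E -> Prop) (B : set (E -> E)) : Prop :=
  (forall P, B P -> order_projection le P) /\
  B zero_op /\ B id_op /\
  (forall P Q, B P -> B Q -> B (P \o Q)) /\
  (forall P, B P -> B (compl_op P)).

Definition volterra (le : E -> E -> Prop) (B : set (E -> E)) (T : E -> E) : Prop :=
  positive_op le T /\
  forall P, B P -> forall x y, P x = P y -> P (T x) = P (T y).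

(* Forward filtration in B, represented by its finite part xi_0, xi_1, ...;
   xi_infty = 1 = I is implicit (it lies in B and dominates every projection). *)
Definition forward_filtration (B : set (E -> E)) (xi : nat -> E -> E) : Prop :=
  (forall n, B (xi n)) /\ (forall x, xi 0%N x = 0) /\
  (forall n x, xi n (xi n.+1 x) = xi n x).

Definition filt_star (xi : nat -> E -> E) : nat -> E -> E :=
  fun n => compl_op (xi n).

Definition filt_L (xi : nat -> E -> E) : nat -> E -> E :=
  fun n => if n == 0%N then xi 0%N else xi n.+1.

(* Sequences (x_n)_{n>=1} are encoded as s : nat -> E with s k = x_{k+1}. *)
Definition M0 (xi : nat -> E -> E) : set (nat -> E) :=
  [set s | forall k m, (k <= m)%N -> xi k.+1 (s m) = s k].

Definition M1 (eta : nat -> E -> E) : set (nat -> E) :=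
  [set s | forall k m, (k <= m)%N -> compl_op (eta k.+1) (s m) = s k].

Definition fshift (s : nat -> E) : nat -> E := fun k => s k.+1.

Definition hat0 (T : E -> E) (xi : nat -> E -> E) (s : nat -> E) : nat -> E :=
  fun k => xi k.+1 (T (s k)).

Definition hat1 (T : E -> E) (eta : nat -> E -> E) (s : nat -> E) : nat -> E :=
  fun k => compl_op (eta k.+1) (T (s k)).

Definition seq_le (le : E -> E -> Prop) (s t : nat -> E) : Prop :=
  forall k, le (s k) (t k).

Definition seq_lin (a : R) (s t : nat -> E) : nat -> E := fun k => a *: s k + t k.

End BL.

From HB Require Import structures.
From mathcomp Require Import all_boot all_order all_algebra.
From mathcomp Require Import all_classical all_reals all_analysis.
Set Implicit Arguments. Unset Strict Implicit. Unset Printing Implicit Defensive.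
Import Order.TTheory GRing.Theory Num.Theory.
Import numFieldNormedType.Exports.
Local Open Scope ring_scope.

(* Since (I - (I - xi_n)) = xi_n, the space M1(xi^* ) is literally M0(xi) and
   the M1-square is the M0-square for the filtration L(xi); the isomorphism is
   the identity.  The Volterra property is what makes hat T_xi preserve M0(xi):
   x_k and x_m (k <= m) agree under xi_{k+1}, hence so do T x_k and T x_m. *)

Section VolterraFiltration.
Variables (R : realType) (E : completeNormedModType R).
Implicit Types (xi : nat -> E -> E) (s : nat -> E) (P T : E -> E).

Lemma compl_opK P : compl_op (compl_op P) = P.
Proof. by apply/funext => x; rewrite /compl_op opprB addrC subrK. Qed.

Lemma M1_filt_star xi : M1 (filt_star xi) = M0 xi.
Proof.
apply/funext => s; apply/propext; rewrite /M1 /M0 /filt_star /=.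
by split=> hs k m km; move: (hs k m km); rewrite compl_opK.
Qed.

Lemma hat1_filt_star T xi : hat1 T (filt_star xi) = hat0 T xi.
Proof. by apply/funext => s; apply/funext => k; rewrite /hat1 /filt_star compl_opK. Qed.

Lemma filt_L_filt_star xi : filt_L (filt_star xi) = filt_star (filt_L xi).
Proof. by apply/funext => -[|n]. Qed.

Lemma M0_fshift xi s : M0 xi s -> M0 (filt_L xi) (fshift s).
Proof. by move=> hs k m km; apply: hs. Qed.

Lemma fshift_hat0 T xi s : fshift (hat0 T xi s) = hat0 T (filt_L xi) (fshift s).
Proof. by []. Qed.

Lemma hat0_seq_lin T xi (a : R) s s' :
  linear_op T -> (forall n, linear_op (xi n)) ->
  hat0 T xi (seq_lin a s s') = seq_lin a (hat0 T xi s) (hat0 T xi s').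
Proof. by move=> Tlin xilin; apply/funext => k; rewrite /hat0 /seq_lin Tlin xilin. Qed.

Lemma hat0_ge0 le T xi s :
  positive_op le T -> (forall n, order_projection le (xi n)) ->
  seq_le le (fun=> 0) s -> seq_le le (fun=> 0) (hat0 T xi s).
Proof.
move=> [_ Tge0] xiP s_ge0 k; have [_ [_ xi_ge0]] := xiP k.+1.
exact: (xi_ge0 _ (Tge0 _ (s_ge0 k))).1.
Qed.

Section ForwardFiltration.
Variables (le : E -> E -> Prop) (B : set (E -> E)) (xi : nat -> E -> E).
Hypotheses (hB : boolean_subalgebra le B) (hxi : forward_filtration B xi).

Lemma filtration_order_projection n : order_projection le (xi n).
Proof. exact: hB.1 _ (hxi.1 n). Qed.

Lemma filtration_absorb k m x : (k <= m)%N -> xi k (xi m x) = xi k x.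
Proof.
have xiK n y : xi n (xi n y) = xi n y.
  by have [_ [+ _]] := filtration_order_projection n.
move=> /subnKC <-; elim: (m - k)%N x => [|j IHj] x; first by rewrite addn0 xiK.
by rewrite addnS -(IHj (xi _ x)) hxi.2.2 IHj.
Qed.

Lemma M0_hat0 T s : volterra le B T -> M0 xi s -> M0 xi (hat0 T xi s).
Proof.
move=> [_ TV] hs k m km; rewrite /hat0 filtration_absorb //.
by apply: TV; [exact: hxi.1 | rewrite hs // hs].
Qed.

End ForwardFiltration.
End VolterraFiltration.

Theorem lemma4p1 (R : realType) (E : completeNormedModType R)
  (le : E -> E -> Prop) (join : E -> E -> E)
  (hBL : banach_lattice le join) (hOC : order_continuous_norm le)
  (B : set (E -> E)) (hB : boolean_subalgebra le B)
  (T : E -> E) (hT : volterra le B T) :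
  forall xi : nat -> E -> E, forward_filtration B xi ->
  (* M0(xi) and M1(xi^* ) are isomorphic ordered vector spaces *)
  (exists (Phi Psi : (nat -> E) -> (nat -> E)),
      (forall s, M0 xi s -> M1 (filt_star xi) (Phi s)) /\
      (forall t, M1 (filt_star xi) t -> M0 xi (Psi t)) /\
      (forall s, M0 xi s -> Psi (Phi s) = s) /\
      (forall t, M1 (filt_star xi) t -> Phi (Psi t) = t) /\
      (forall (a : R) s s', M0 xi s -> M0 xi s' ->
          Phi (seq_lin a s s') = seq_lin a (Phi s) (Phi s')) /\
      (forall s s', M0 xi s -> M0 xi s' ->
          (seq_le le s s' <-> seq_le le (Phi s) (Phi s')))) /\
  (* hat T_xi is a positive operator on M0(xi) *)
  (forall s, M0 xi s -> M0 xi (hat0 T xi s)) /\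
  (forall (a : R) s s', M0 xi s -> M0 xi s' ->
      hat0 T xi (seq_lin a s s') = seq_lin a (hat0 T xi s) (hat0 T xi s')) /\
  (forall s, M0 xi s -> seq_le le (fun _ => 0) s ->
      seq_le le (fun _ => 0) (hat0 T xi s)) /\
  (* the square for M0 commutes *)
  (forall s, M0 xi s -> M0 (filt_L xi) (fshift s)) /\
  (forall s, M0 xi s -> fshift (hat0 T xi s) = hat0 T (filt_L xi) (fshift s)) /\
  (* the square for M1 commutes *)
  (forall t, M1 (filt_star xi) t -> M1 (filt_star xi) (hat1 T (filt_star xi) t)) /\
  (forall t, M1 (filt_star xi) t -> M1 (filt_L (filt_star xi)) (fshift t)) /\
  (forall t, M1 (filt_star xi) t ->
      fshift (hat1 T (filt_star xi) t) = hat1 T (filt_L (filt_star xi)) (fshift t)).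
Proof.
move=> xi hxi; have xiP := filtration_order_projection hB hxi.
rewrite filt_L_filt_star !hat1_filt_star !M1_filt_star.
split; first by exists id, id; do !split.
have [Tpos _] := hT.
have xilin n : linear_op (xi n) by case: (xiP n).
have hatM s : M0 xi s -> M0 xi (hat0 T xi s) := M0_hat0 hB hxi hT.
split; first exact: hatM.
split; first by move=> a s s' _ _; apply: hat0_seq_lin Tpos.1 xilin.
split; first by move=> s _; apply: hat0_ge0 Tpos xiP.
split; first exact: M0_fshift.
split; first by move=> s _; apply: fshift_hat0.
split; first exact: hatM.
split; first exact: M0_fshift.
by move=> t _; apply: fshift_hat0.
Qed.
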